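(* Let $N$ be a positive integer and $L,Q,R,S$ constant complex $N\times N$ matrices, $H=\begin{pmatrix}R&Q\\S&L\end{pmatrix}$, $H^n=\begin{pmatrix}R_n&Q_n\\S_n&L_n\end{pmatrix}$. Fix a sign $\pm$. If the $N\times N$ matrix function $\Phi$ of $\mathbf{t}=(t_1,t_2,t_3,\ldots)$ solves the Riccati hierarchy $\Phi_{t_n}=S_n+L_n\Phi-\Phi R_n-\Phi Q_n\Phi$ ($n=1,2,3,\ldots$) with data $(L,R,Q,S)$, then $\pm\Phi^\intercal\circ\varepsilon$ solves the Riccati hierarchy with data $(-R^\intercal,-L^\intercal,\pm Q^\intercal,\pm S^\intercal)$ in place of $(L,R,Q,S)$ (i.e. the transformation $L\mapsto-R^\intercal$, $R\mapsto-L^\intercal$, $Q\mapsto\pm Q^\intercal$, $S\mapsto\pm S^\intercal$, $\Phi\mapsto\pm\Phi^\intercal\circ\varepsilon$ leaves the Riccati hierarchy invariant), where $\varepsilon(t_1,t_2,t_3,t_4,\ldots)=(t_1,-t_2,t_3,-t_4,\ldots)$.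
   Context: ${}^\intercal$ denotes the transpose. For the transformed data, the matrices $R_n,Q_n,S_n,L_n$ in the hierarchy are the blocks of the $n$-th power of the transformed matrix $H$. *)

From HB Require Import structures.
From mathcomp Require Import all_boot all_order all_algebra.
From mathcomp Require Import complex.
From mathcomp Require Import all_classical all_reals all_analysis.
Set Implicit Arguments. Unset Strict Implicit. Unset Printing Implicit Defensive.
Import Order.TTheory GRing.Theory Num.Theory.
Import numFieldNormedType.Exports.
Local Open Scope ring_scope.

(* Times t = (t_1, t_2, t_3, ...) are encoded as t : nat -> K with
   t k = t_{k+1}. *)

Definition tshift (K : numFieldType) (t : nat -> K) (n : nat) (s : K) : nat -> K :=
  fun k => if k == n then t k + s else t k.

Definition teps (K : numFieldType) (t : nat -> K) : nat -> K :=
  fun k => (-1) ^+ k * t k.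

Definition is_pderiv (K : numFieldType) (N : nat) (Phi : (nat -> K) -> 'M[K]_N)
  (n : nat) (t : nat -> K) (D : 'M[K]_N) : Prop :=
  forall i j, is_derive (0 : K) (1 : K) (fun s : K => Phi (tshift t n s) i j) (D i j).

Definition Hmx (K : numFieldType) (N : nat) (L R Q S : 'M[K]_N) : 'M[K]_(N + N) :=
  block_mx R Q S L.

Definition Rn (K : numFieldType) N (L R Q S : 'M[K]_N) m := ulsubmx (Hmx L R Q S ^+ m).
Definition Qn (K : numFieldType) N (L R Q S : 'M[K]_N) m := ursubmx (Hmx L R Q S ^+ m).
Definition Sn (K : numFieldType) N (L R Q S : 'M[K]_N) m := dlsubmx (Hmx L R Q S ^+ m).
Definition Ln (K : numFieldType) N (L R Q S : 'M[K]_N) m := drsubmx (Hmx L R Q S ^+ m).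

Definition riccati_hierarchy (K : numFieldType) (N : nat) (L R Q S : 'M[K]_N)
  (Phi : (nat -> K) -> 'M[K]_N) : Prop :=
  forall (n : nat) (t : nat -> K),
    let m := n.+1 in
    is_pderiv Phi n t
      (Sn L R Q S m + Ln L R Q S m *m Phi t - Phi t *m Rn L R Q S m
       - Phi t *m Qn L R Q S m *m Phi t).

From HB Require Import structures.
From mathcomp Require Import all_boot all_order all_algebra.
From mathcomp Require Import complex.
From mathcomp Require Import all_classical all_reals all_analysis.
Set Implicit Arguments.
Unset Strict Implicit.
Unset Printing Implicit Defensive.
Import Order.TTheory GRing.Theory Num.Theory.
Import numFieldNormedType.Exports.
Local Open Scope ring_scope.

(* The map tau sending [A B; C D] to [D^T, -/+B^T; -/+C^T, A^T] reverses
   products, because (-/+1)^2 = 1, and the block matrix of the transformed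
   data is H' = -tau(H).  Hence H'^m = (-1)^m tau(H^m), which expresses the
   transformed blocks through the transposed original ones, and substituting
   +/-Phi^T into the transformed right-hand side gives +/-(-1)^(m-1) times the
   transpose of the original right-hand side.  On the other side, epsilon
   moves t_m by (-1)^(m-1) s when t_m moves by s, so the chain rule produces
   the same factor on the derivative. *)

Lemma is_derive_scale_arg (K : numFieldType) (f : K -> K) (c D : K) :
  is_derive (0 : K) (1 : K) f D ->
  is_derive (0 : K) (1 : K) (fun s => f (c * s)) (c * D).
Proof.
move=> [df <-].
have fdiff : differentiable f 0 by apply/derivable1_diffP.
have fcdiff : differentiable (f \o *:%R c) 0.
  by apply: differentiable_comp; rewrite ?scaler0.
rewrite (_ : (fun s => f (c * s)) = f \o *:%R c) //.
apply: DeriveDef; first exact/derivable1_diffP.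
rewrite deriveE // diff_comp ?scaler0 //= (diff1E fdiff) diff_val /=.
by rewrite derive1E deriveE // /GRing.scale /= mulr1.
Qed.

Lemma teps_tshift (K : numFieldType) (t : nat -> K) n s :
  teps (tshift t n s) = tshift (teps t) n ((-1) ^+ n * s).
Proof.
by apply/funext => k; rewrite /teps /tshift; case: eqP => [->|_]; rewrite ?mulrDr.
Qed.

Definition twisted_trmx (K : comPzRingType) N (c : K) (M : 'M[K]_(N + N)) :=
  block_mx (drsubmx M)^T (c *: (ursubmx M)^T) (c *: (dlsubmx M)^T) (ulsubmx M)^T.

Section TwistedTranspose.

Variables (K : comPzRingType) (N : nat) (c : K).
Hypothesis cK : c * c = 1.

Lemma twisted_trmx1 : twisted_trmx c 1 = 1 :> 'M[K]_(N + N).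
Proof.
rewrite /twisted_trmx -[1 : 'M[K]_(N + N)]/(1%:M) scalar_mx_block.
by rewrite !(block_mxKul, block_mxKur, block_mxKdl, block_mxKdr) !trmx1 !trmx0 !scaler0.
Qed.

Lemma twisted_trmx_mul (A B : 'M[K]_(N + N)) :
  twisted_trmx c (A *m B) = twisted_trmx c B *m twisted_trmx c A.
Proof.
rewrite -[A]submxK -[B]submxK /twisted_trmx mulmx_block.
rewrite !(block_mxKul, block_mxKur, block_mxKdl, block_mxKdr) mulmx_block.
rewrite !linearD /= !trmx_mul -!scalemxAl -!scalemxAr !scalerA cK !scale1r.
by congr block_mx; rewrite ?scalerDr // addrC.
Qed.

Lemma twisted_trmx_exp (A : 'M[K]_(N + N)) m :
  twisted_trmx c (A ^+ m) = twisted_trmx c A ^+ m.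
Proof.
elim: m => [|m IH]; first by rewrite !expr0 twisted_trmx1.
by rewrite exprS -mulmxE twisted_trmx_mul IH exprSr mulmxE.
Qed.

End TwistedTranspose.

Definition riccati_rhs (K : numFieldType) N (L R Q S : 'M[K]_N) m (P : 'M[K]_N) :=
  Sn L R Q S m + Ln L R Q S m *m P - P *m Rn L R Q S m - P *m Qn L R Q S m *m P.

Section TransposedData.

Variables (K : numFieldType) (N : nat) (L R Q S : 'M[K]_N) (sg : K).
Hypothesis sgK : sg * sg = 1.

Local Notation L' := (- R^T).
Local Notation R' := (- L^T).
Local Notation Q' := (sg *: Q^T).
Local Notation S' := (sg *: S^T).

Lemma Hmx_transposed : Hmx L' R' Q' S' = - twisted_trmx (- sg) (Hmx L R Q S).
Proof.
rewrite /Hmx /twisted_trmx opp_block_mx.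
by rewrite !(block_mxKul, block_mxKur, block_mxKdl, block_mxKdr) !scaleNr !opprK.
Qed.

Lemma Hmx_transposed_exp m :
  Hmx L' R' Q' S' ^+ m = (-1) ^+ m *: twisted_trmx (- sg) (Hmx L R Q S ^+ m).
Proof.
have sgK' : - sg * - sg = 1 by rewrite mulrNN.
elim: m => [|m IH]; first by rewrite !expr0 scale1r twisted_trmx1.
rewrite exprS IH [Hmx L R Q S ^+ m.+1]exprSr -!mulmxE twisted_trmx_mul // Hmx_transposed.
by rewrite mulNmx -scalemxAr exprS mulN1r scaleNr.
Qed.

Lemma transposed_blocks m :
  [/\ Sn L' R' Q' S' m = ((-1) ^+ m * - sg) *: (Sn L R Q S m)^T,
      Qn L' R' Q' S' m = ((-1) ^+ m * - sg) *: (Qn L R Q S m)^T,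
      Rn L' R' Q' S' m = (-1) ^+ m *: (Ln L R Q S m)^T &
      Ln L' R' Q' S' m = (-1) ^+ m *: (Rn L R Q S m)^T].
Proof.
rewrite /Sn /Qn /Rn /Ln Hmx_transposed_exp /twisted_trmx scale_block_mx.
by rewrite !(block_mxKul, block_mxKur, block_mxKdl, block_mxKdr) !scalerA.
Qed.

Lemma riccati_rhs_transposed n P :
  riccati_rhs L' R' Q' S' n.+1 (sg *: P^T) =
  (sg * (-1) ^+ n) *: (riccati_rhs L R Q S n.+1 P)^T.
Proof.
rewrite /riccati_rhs; have [-> -> -> ->] := transposed_blocks n.+1.
have -> : sg * (-1) ^+ n = - (-1) ^+ n.+1 * sg by rewrite exprS mulN1r opprK mulrC.
move: (Sn _ _ _ _ _) (Qn _ _ _ _ _) (Rn _ _ _ _ _) (Ln _ _ _ _ _) ((-1) ^+ n.+1).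
move=> Sm Qm Rm Lm a.
rewrite !linearD !linearN /= !trmx_mul -!scalemxAl -!scalemxAr !scalerA.
rewrite -scalemxAl !scalerA sgK mul1r mulmxA [sg * a]mulrC !mulrN !mulNr.
by rewrite !scaleNr !opprK; congr (_ + _); exact: addrAC.
Qed.

End TransposedData.

Theorem lemma5p1 (R0 : realType) (N : nat) (hN : (0 < N)%N)
  (L R Q S : 'M[R0[i]]_N) (sg : R0[i]) (hsg : sg = 1 \/ sg = -1)
  (Phi : (nat -> R0[i]) -> 'M[R0[i]]_N) :
  riccati_hierarchy L R Q S Phi ->
  riccati_hierarchy (- R^T) (- L^T) (sg *: Q^T) (sg *: S^T)
    (fun t => sg *: (Phi (teps t))^T).
Proof.
have sgK : sg * sg = 1 by case: hsg => ->; rewrite ?mulrNN mulr1.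
move=> PhiH n t /=.
have := riccati_rhs_transposed L R Q S sgK n (Phi (teps t)).
rewrite /riccati_rhs => -> i j.
have -> : (fun s => (sg *: (Phi (teps (tshift t n s)))^T) i j) =
          sg \*: (fun s => Phi (tshift (teps t) n ((-1) ^+ n * s)) j i).
  by apply/funext => s; rewrite teps_tshift !mxE.
apply: is_derive_eq.
  exact: is_deriveZ (is_derive_scale_arg ((-1) ^+ n) (PhiH n (teps t) j i)).
by rewrite 2![in RHS]mxE -mulrA.
Qed.
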